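(* Let $a\neq0$ and $b\in\mathbb R$, and let $A\in\{X,Y\}$. Suppose $\psi,p$ satisfy $\dot\psi=A\psi$, $\dot p=-A^{\top}p$ for $t\ge0$ with reduced data $(\phi_1,\phi_2,\phi_3)(0)=(0,a,b)$, and let $\tau_A>0$ be the smallest positive zero of $\phi_1$. Then $(\phi_1,\phi_2,\phi_3)(\tau_A)=(0,-a,b)$, for both $A=X$ and $A=Y$. That is, the shortest switching-to-switching $X$-arc and the shortest switching-to-switching $Y$-arc induce the same map $(0,a,b)\mapsto(0,-a,b)$ on reduced data.
   Context: Fix $\gamma\in(0,\pi/2)$, $s=\sin\gamma$, $c=\cos\gamma$, and $X=\begin{pmatrix}0&s^2&sc\\-s^2&0&0\\-sc&0&0\end{pmatrix}$, $Y=\begin{pmatrix}0&1&0\\-1&0&0\\0&0&0\end{pmatrix}$. Let $F_1=X-Y$, $F_2=[X,Y]$, $F_3=[Y,[X,Y]]$ and define the reduced variables $\phi_i(t)=\langle p(t),F_i\psi(t)\rangle$, $i=1,2,3$, with the standard inner product on $\mathbb R^3$. *)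

From HB Require Import structures.
From mathcomp Require Import all_boot all_order all_algebra.
From mathcomp Require Import all_classical all_reals all_analysis.
Set Implicit Arguments. Unset Strict Implicit. Unset Printing Implicit Defensive.
Import Order.TTheory GRing.Theory Num.Theory.
Import numFieldNormedType.Exports.
Local Open Scope ring_scope.
Local Open Scope classical_set_scope.

Section Defs.
Variable R : realType.

Definition Xmat (g : R) : 'M[R]_3 :=
  \matrix_(i < 3, j < 3)
    (let s := sin g in let c := cos g in
     match nat_of_ord i, nat_of_ord j with
     | 0%N, 1%N => s ^+ 2
     | 0%N, 2%N => s * c
     | 1%N, 0%N => - s ^+ 2
     | 2%N, 0%N => - (s * c)
     | _, _ => 0
     end).

Definition Ymat : 'M[R]_3 :=
  \matrix_(i < 3, j < 3)
    (match nat_of_ord i, nat_of_ord j with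
     | 0%N, 1%N => 1
     | 1%N, 0%N => -1
     | _, _ => 0
     end).

Definition lie (M N : 'M[R]_3) : 'M[R]_3 := M *m N - N *m M.

Definition F1 (g : R) : 'M[R]_3 := Xmat g - Ymat.
Definition F2 (g : R) : 'M[R]_3 := lie (Xmat g) Ymat.
Definition F3 (g : R) : 'M[R]_3 := lie Ymat (lie (Xmat g) Ymat).

Definition dot3 (u v : 'cV[R]_3) : R := \sum_(i < 3) u i ord0 * v i ord0.

Definition phi (F : 'M[R]_3) (p psi : R -> 'cV[R]_3) (t : R) : R :=
  dot3 (p t) (F *m psi t).

End Defs.
Arguments Ymat {R}.

(* Differentiating along the flow gives d/dt <p, F psi> = <p, [F, A] psi>, so the
   reduced variables obey a closed linear system in which phi1' = phi2 for both A.
   For A = X it reads phi2' = - s^2 phi1, phi3' = s^2 phi2; for A = Y it reads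
   phi2' = - phi3, phi3' = phi2.  In both cases phi3 - k phi1 (k = s^2, resp. 1) and an
   energy (phi2^2 + s^2 phi1^2, resp. phi2^2 + phi3^2) are first integrals, and together
   with phi1(0) = phi1(tau) = 0 they give phi3(tau) = b and phi2(tau) = +-a.
   The case phi2(tau) = a is excluded: phi1 would leave 0 and come back to 0 with the
   sign of a at both ends, so by the mean value and intermediate value theorems it would
   vanish strictly inside (0, tau). *)

From HB Require Import structures.
From mathcomp Require Import all_boot all_order all_algebra.
From mathcomp Require Import all_classical all_reals all_analysis.
Import Order.TTheory GRing.Theory Num.Theory.
Import numFieldNormedType.Exports.
Local Open Scope ring_scope.
Local Open Scope classical_set_scope.
From mathcomp Require Import ring lra.

Set Implicit Arguments.
Unset Strict Implicit.
Unset Printing Implicit Defensive.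

Section real_functions.
Variable R : realType.
Implicit Types (f df : R -> R) (a k t u v x tau : R).

Lemma continuous_within_itv_pos f u v :
  (forall t, 0 < t -> derivable f t 1) -> f x @[x --> 0^'+] --> f 0 ->
  0 <= u -> u < v -> {within `[u, v], continuous f}.
Proof.
move=> df f0 u_ge0 uv.
have fc t : 0 < t -> {for t, continuous f}.
  by move=> t_gt0; apply/differentiable_continuous/derivable1_diffP/df.
apply/(continuous_within_itvP _ uv); split.
- by move=> t; rewrite in_itv /= => /andP[ut tv]; apply: fc; lra.
- have [->|u_neq0] := eqVneq u 0; first exact: f0.
  by apply/cvg_at_right_filter/fc; rewrite lt_def u_neq0.
- by apply/cvg_at_left_filter/fc; lra.
Qed.

Lemma is_derive0_const_pos f tau :
  (forall t, 0 < t -> is_derive t 1 f 0) -> f x @[x --> 0^'+] --> f 0 ->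
  0 < tau -> f tau = f 0.
Proof.
move=> df0 f0 tau_gt0.
have [x||c _] := @MVT R f (fun=> 0) 0 tau tau_gt0.
- by rewrite in_itv /= => /andP[x_gt0 _]; exact: df0.
- by apply: continuous_within_itv_pos => // t /df0 [].
by rewrite mul0r => /eqP; rewrite subr_eq0 => /eqP.
Qed.

Lemma cvg_right_gt0 f x a e : f y @[y --> x^'+] --> a -> 0 < a -> 0 < e ->
  exists2 d, 0 < d <= e & forall y, x < y < x + d -> 0 < f y.
Proof.
move=> fa a_gt0 e_gt0.
have /nbhs_ballP[d d_gt0 fd] : \forall y \near x, x < y -> 0 < f y.
  exact: cvgr_gt fa _ a_gt0.
have [de_gt0 de_d de_e] : [/\ 0 < Num.min d e, Num.min d e <= d & Num.min d e <= e].
  by rewrite lt_min d_gt0 e_gt0 !ge_min !lexx orbT.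
exists (Num.min d e) => [|y /andP[xy yd]]; first by rewrite de_gt0 de_e.
by apply: fd => //; rewrite /ball /= ltr_norml; apply/andP; split; lra.
Qed.

Lemma cvg_left_gt0 f x a e : f y @[y --> x^'-] --> a -> 0 < a -> 0 < e ->
  exists2 d, 0 < d <= e & forall y, x - d < y < x -> 0 < f y.
Proof.
move=> fa a_gt0 e_gt0.
have /nbhs_ballP[d d_gt0 fd] : \forall y \near x, y < x -> 0 < f y.
  exact: cvgr_gt fa _ a_gt0.
have [de_gt0 de_d de_e] : [/\ 0 < Num.min d e, Num.min d e <= d & Num.min d e <= e].
  by rewrite lt_min d_gt0 e_gt0 !ge_min !lexx orbT.
exists (Num.min d e) => [|y /andP[dy yx]]; first by rewrite de_gt0 de_e.
by apply: fd => //; rewrite /ball /= ltr_norml; apply/andP; split; lra.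
Qed.

Lemma MVT_mul_gt0 f df a u v : u < v ->
  (forall x, u < x < v -> is_derive x 1 f (df x)) ->
  {within `[u, v], continuous f} ->
  (forall x, u < x < v -> 0 < a * df x) -> 0 < a * (f v - f u).
Proof.
move=> uv fdf fc adf_gt0.
have fdf' x : x \in `]u, v[%R -> is_derive x 1 f (df x).
  by rewrite in_itv => /fdf.
have [c c_in ->] := MVT uv fdf' fc.
rewrite in_itv /= in c_in.
by rewrite mulrA mulr_gt0 ?adf_gt0 // subr_gt0.
Qed.

Lemma IVT_mul_lt0 f u v : u <= v -> {within `[u, v], continuous f} ->
  f u * f v < 0 -> exists2 c, c \in `[u, v]%R & f c = 0.
Proof.
move=> uv fc fuv_lt0; apply: IVT => //.
by rewrite ge_min le_max; case: (ltrgtP (f u) 0) => fu; nra.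
Qed.

Lemma root_between_equal_slopes f df tau :
  (forall t, 0 < t -> is_derive t 1 f (df t)) ->
  (forall t, 0 < t -> derivable df t 1) ->
  f x @[x --> 0^'+] --> f 0 -> df x @[x --> 0^'+] --> df 0 ->
  0 < tau -> f 0 = 0 -> f tau = 0 -> df 0 != 0 -> df tau = df 0 ->
  exists2 t : R, 0 < t < tau & f t = 0.
Proof.
move=> fdf ddf f0 df0 tau_gt0 f0_eq0 ftau_eq0 a_neq0 dftau.
set a := df 0 in a_neq0 dftau.
have aa_gt0 : 0 < a * a by rewrite -expr2 exprn_even_gt0.
have tau2_gt0 : 0 < tau / 2 by rewrite divr_gt0.
have [d1 /andP[d1_gt0 d1_le] adf_gt0_right] :
    exists2 d, 0 < d <= tau / 2 & forall y, 0 < y < 0 + d -> 0 < a * df y.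
  by apply: cvg_right_gt0 aa_gt0 tau2_gt0; apply: cvgMr.
have [d2 /andP[d2_gt0 d2_le] adf_gt0_left] :
    exists2 d, 0 < d <= tau / 2 & forall y, tau - d < y < tau -> 0 < a * df y.
  apply: cvg_left_gt0 aa_gt0 tau2_gt0; apply: cvgMr; rewrite -dftau.
  exact/cvg_at_left_filter/differentiable_continuous/derivable1_diffP/ddf.
pose t1 := d1 / 2; pose t2 := tau - d2 / 2.
have [t1_gt0 t1_t2 t2_tau] : [/\ 0 < t1, t1 < t2 & t2 < tau] by rewrite /t1 /t2; split; lra.
have fc u v : 0 <= u -> u < v -> {within `[u, v], continuous f}.
  by apply: continuous_within_itv_pos => // t /fdf [].
have ft1 : 0 < a * (f t1 - f 0).
  apply: (MVT_mul_gt0 t1_gt0 _ (fc _ _ (lexx 0) t1_gt0)) => x /andP[x_gt0 x_t1].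
  - exact: fdf.
  - by apply: adf_gt0_right; rewrite /t1 in x_t1; lra.
have ft2 : 0 < a * (f tau - f t2).
  apply: (MVT_mul_gt0 t2_tau _ (fc _ _ _ t2_tau)) => [x /andP[t2_x _]||x /andP[t2_x x_tau]].
  - by apply: fdf; lra.
  - lra.
  - by apply: adf_gt0_left; rewrite /t2 in t2_x; lra.
have ft12 : f t1 * f t2 < 0.
  by rewrite f0_eq0 subr0 in ft1; rewrite ftau_eq0 sub0r in ft2; nra.
have [c] := IVT_mul_lt0 (ltW t1_t2) (fc _ _ (ltW t1_gt0) t1_t2) ft12.
rewrite in_itv /= => /andP[t1_c c_t2] fc0.
by exists c => //; apply/andP; split; lra.
Qed.

Lemma linear_first_integral (u v w : R -> R) k tau :
  (forall t, 0 < t -> is_derive t 1 u (k * w t)) ->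
  (forall t, 0 < t -> is_derive t 1 v (w t)) ->
  u x @[x --> 0^'+] --> u 0 -> v x @[x --> 0^'+] --> v 0 ->
  0 < tau -> u tau - k * v tau = u 0 - k * v 0.
Proof.
move=> du dv u0 v0 tau_gt0.
apply: (@is_derive0_const_pos (fun t => u t - k * v t)) => // [t t_gt0|].
- have := is_deriveB (du t t_gt0) (is_deriveZ k (dv t t_gt0)).
  by move/is_derive_eq; apply; rewrite subrr.
- by apply: cvgB => //; apply: cvgMr.
Qed.

Lemma energy_first_integral (u v : R -> R) k tau :
  (forall t, 0 < t -> is_derive t 1 u (- (k * v t))) ->
  (forall t, 0 < t -> is_derive t 1 v (u t)) ->
  u x @[x --> 0^'+] --> u 0 -> v x @[x --> 0^'+] --> v 0 ->
  0 < tau -> u tau ^+ 2 + k * v tau ^+ 2 = u 0 ^+ 2 + k * v 0 ^+ 2.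
Proof.
move=> du dv u0 v0 tau_gt0.
apply: (@is_derive0_const_pos (fun t => u t ^+ 2 + k * v t ^+ 2)) => // [t t_gt0|].
- have dut := du t t_gt0; have dvt := dv t t_gt0.
  have := is_deriveD (is_deriveM dut dut) (is_deriveZ k (is_deriveM dvt dvt)).
  by move/is_derive_eq; apply; rewrite /GRing.scale /=; ring.
- by apply: cvgD; [|apply: cvgMr]; apply: cvgM.
Qed.
End real_functions.

Section reduced_variables.
Variable R : realType.
Implicit Types (F A : 'M[R]_3) (p psi : R -> 'cV[R]_3) (t : R).

Lemma is_derive_coord m n (f : R -> 'M[R]_(m, n)) t (df : 'M[R]_(m, n)) i j :
  is_derive t 1 f df -> is_derive t 1 (fun x => f x i j) (df i j).
Proof.
move=> fdf; have f_t : derivable f t 1 by case: fdf.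
have fij_t := (derivable_mxP f t 1).1 f_t i j.
have := derive_mx f_t; rewrite derive_val => ->; rewrite mxE.
exact: derivableP.
Qed.

Lemma dot3_mulmxE F (u w : 'cV[R]_3) :
  dot3 u (F *m w) = \sum_(i < 3) \sum_(j < 3) F i j * (u i 0 * w j 0).
Proof.
rewrite /dot3; apply: eq_bigr => i _; rewrite mxE big_distrr.
by apply: eq_bigr => j _; rewrite mulrCA.
Qed.

Lemma dot3_lie F A (u w : 'cV[R]_3) :
  dot3 u (F *m (A *m w)) + dot3 (- (A^T *m u)) (F *m w) = dot3 u (lie F A *m w).
Proof.
have dot3E (x y : 'cV[R]_3) : dot3 x y = (x^T *m y) 0 0.
  by rewrite !mxE; apply: eq_bigr => i _; rewrite mxE.
rewrite !dot3E /lie raddfN /= trmx_mul trmxK mulmxBl mulmxBr !mulNmx !mulmxA.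
by rewrite !mxE.
Qed.

Lemma is_derive_phi F A p psi t :
  is_derive t 1 psi (A *m psi t) -> is_derive t 1 p (- (A^T *m p t)) ->
  is_derive t 1 (phi F p psi) (phi (lie F A) p psi t).
Proof.
move=> dpsi dp.
pose h i j x := F i j * (p x i 0 * psi x j 0).
have phiE : phi F p psi = \sum_(i < 3) \sum_(j < 3) h i j.
  apply/funext => x; rewrite /phi dot3_mulmxE fct_sumE /=.
  by apply: eq_bigr => i _; rewrite fct_sumE.
have dh i j : is_derive t 1 (h i j) (F i j * (p t i 0 * (A *m psi t) j 0)
                                   + F i j * ((- (A^T *m p t)) i 0 * psi t j 0)).
  have := is_deriveZ (F i j) (is_deriveM (is_derive_coord i 0 dp) (is_derive_coord j 0 dpsi)).
  by move/is_derive_eq; apply; rewrite /GRing.scale /=; ring.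
rewrite phiE; move: (is_derive_sum (fun i => is_derive_sum (dh i))).
move/is_derive_eq; apply.
rewrite /phi -dot3_lie !dot3_mulmxE -big_split /=.
by apply: eq_bigr => i _; rewrite big_split.
Qed.

Lemma phi_cvg_right F p psi :
  psi x @[x --> 0^'+] --> psi 0 -> p x @[x --> 0^'+] --> p 0 ->
  phi F p psi x @[x --> 0^'+] --> phi F p psi 0.
Proof.
move=> psi0 p0; rewrite /phi dot3_mulmxE; under eq_cvg do rewrite dot3_mulmxE.
apply: cvg_big => [|i _]; first exact: add_continuous.
apply: cvg_big => [|j _]; first exact: add_continuous.
apply: cvgMr; apply: cvgM.
- exact: (continuous_cvg _ (@coord_continuous R 3 1 i 0 (p 0)) p0).
- exact: (continuous_cvg _ (@coord_continuous R 3 1 j 0 (psi 0)) psi0).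
Qed.

Lemma phiZ k F p psi t : phi (k *: F) p psi t = k * phi F p psi t.
Proof.
rewrite /phi !dot3_mulmxE mulr_sumr; apply: eq_bigr => i _.
by rewrite mulr_sumr; apply: eq_bigr => j _; rewrite mxE -mulrA.
Qed.

Lemma phiN F p psi t : phi (- F) p psi t = - phi F p psi t.
Proof. by rewrite -scaleN1r phiZ mulN1r. Qed.
End reduced_variables.

Section brackets.
Variables (R : realType) (g : R).

Local Ltac entrywise := apply/matrixP => -[[|[|[|?]]] ?] [[|[|[|?]]] ?] //;
  rewrite !mxE !big_ord_recr !big_ord0 /= !mxE /=.

Lemma lie_F1 A : A = Xmat g \/ A = Ymat -> lie (F1 g) A = F2 g.
Proof.
rewrite /F1 /F2 /lie => -[]->; rewrite mulmxBl mulmxBr opprB.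
- by rewrite addrC addrA subrK.
- by rewrite addrA subrK.
Qed.

Lemma lie_F2_Y : lie (F2 g) Ymat = - F3 g.
Proof. by rewrite /F3 /lie opprB. Qed.

Lemma F2E : F2 g = \matrix_(i < 3, j < 3)
  match nat_of_ord i, nat_of_ord j with
  | 1%N, 2%N => sin g * cos g | 2%N, 1%N => - (sin g * cos g) | _, _ => 0
  end.
Proof. by rewrite /F2 /lie; entrywise; ring. Qed.

Lemma F3E : F3 g = \matrix_(i < 3, j < 3)
  match nat_of_ord i, nat_of_ord j with
  | 0%N, 2%N => sin g * cos g | 2%N, 0%N => - (sin g * cos g) | _, _ => 0
  end.
Proof. by rewrite /F3 -/(F2 g) F2E /lie; entrywise; ring. Qed.

Lemma lie_F3_X : lie (F3 g) (Xmat g) = sin g ^+ 2 *: F2 g.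
Proof. by rewrite F3E F2E /lie; entrywise; ring. Qed.

Lemma lie_F3_Y : lie (F3 g) Ymat = F2 g.
Proof. by rewrite F3E F2E /lie; entrywise; ring. Qed.

Lemma lie_F2_X : lie (F2 g) (Xmat g) = - sin g ^+ 2 *: F1 g.
Proof.
have cos2Dsin2_g := cos2Dsin2 g.
(* the entries [1] of [Ymat] become [cos g ^+ 2 + sin g ^+ 2] *)
by rewrite F2E /F1 /lie; entrywise; rewrite -?cos2Dsin2_g; ring.
Qed.
End brackets.

Section reduced_dynamics.
Variables (R : realType) (g : R) (A : 'M[R]_3) (p psi : R -> 'cV[R]_3).
Hypothesis A_XY : A = Xmat g \/ A = Ymat.
Hypothesis dpsi : forall t : R, 0 < t -> is_derive t 1 psi (A *m psi t).
Hypothesis dp : forall t : R, 0 < t -> is_derive t 1 p (- (A^T *m p t)).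
Hypothesis psi0 : psi x @[x --> 0^'+] --> psi 0.
Hypothesis p0 : p x @[x --> 0^'+] --> p 0.
Implicit Types (F : 'M[R]_3) (t tau : R).

Lemma is_derive_reduced F t :
  0 < t -> is_derive t 1 (phi F p psi) (phi (lie F A) p psi t).
Proof. by move=> t_gt0; apply: is_derive_phi; [apply: dpsi | apply: dp]. Qed.

Lemma is_derive_phi1 t :
  0 < t -> is_derive t 1 (phi (F1 g) p psi) (phi (F2 g) p psi t).
Proof. by rewrite -(lie_F1 A_XY); apply: is_derive_reduced. Qed.

Lemma reduced_first_integrals tau :
  0 < tau -> phi (F1 g) p psi 0 = 0 -> phi (F1 g) p psi tau = 0 ->
  phi (F2 g) p psi tau ^+ 2 = phi (F2 g) p psi 0 ^+ 2 /\
  phi (F3 g) p psi tau = phi (F3 g) p psi 0.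
Proof.
move=> tau_gt0 phi1_0 phi1_tau.
have cvg0 F : phi F p psi x @[x --> 0^'+] --> phi F p psi 0.
  exact: phi_cvg_right.
case: A_XY => A_eq.
- have d2 t : 0 < t ->
      is_derive t 1 (phi (F2 g) p psi) (- (sin g ^+ 2 * phi (F1 g) p psi t)).
    by rewrite -mulNr -phiZ -lie_F2_X -A_eq; apply: is_derive_reduced.
  have d3 t : 0 < t ->
      is_derive t 1 (phi (F3 g) p psi) (sin g ^+ 2 * phi (F2 g) p psi t).
    by rewrite -phiZ -lie_F3_X -A_eq; apply: is_derive_reduced.
  have := energy_first_integral d2 is_derive_phi1 (cvg0 _) (cvg0 _) tau_gt0.
  have := linear_first_integral d3 is_derive_phi1 (cvg0 _) (cvg0 _) tau_gt0.
  rewrite phi1_0 phi1_tau expr0n /= !mulr0 !subr0 !addr0.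
  by split.
- have d2 t : 0 < t ->
      is_derive t 1 (phi (F2 g) p psi) (- (1 * phi (F3 g) p psi t)).
    by rewrite mul1r -phiN -lie_F2_Y -A_eq; apply: is_derive_reduced.
  have d3 t : 0 < t -> is_derive t 1 (phi (F3 g) p psi) (phi (F2 g) p psi t).
    by rewrite -lie_F3_Y -A_eq; apply: is_derive_reduced.
  have d3' t : 0 < t -> is_derive t 1 (phi (F3 g) p psi) (1 * phi (F2 g) p psi t).
    by rewrite mul1r; apply: d3.
  have := linear_first_integral d3' is_derive_phi1 (cvg0 _) (cvg0 _) tau_gt0.
  rewrite phi1_0 phi1_tau !mul1r !subr0 => phi3_tau; split => //.
  have := energy_first_integral d2 d3 (cvg0 _) (cvg0 _) tau_gt0.
  by rewrite phi3_tau !mul1r => /addIr.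
Qed.
End reduced_dynamics.

Theorem mainTheorem8 (R : realType) (g a b : R) (A : 'M[R]_3)
  (psi p : R -> 'cV[R]_3) (tau : R) :
  0 < g -> g < pi / 2 ->
  a != 0 ->
  (A = Xmat g \/ A = Ymat) ->
  (forall t : R, 0 < t -> is_derive t 1 psi (A *m psi t)) ->
  (forall t : R, 0 < t -> is_derive t 1 p (- (A^T *m p t))) ->
  psi x @[x --> 0^'+] --> psi 0 ->
  p x @[x --> 0^'+] --> p 0 ->
  phi (F1 g) p psi 0 = 0 ->
  phi (F2 g) p psi 0 = a ->
  phi (F3 g) p psi 0 = b ->
  0 < tau ->
  phi (F1 g) p psi tau = 0 ->
  (forall t : R, 0 < t < tau -> phi (F1 g) p psi t != 0) ->
  [/\ phi (F1 g) p psi tau = 0,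
      phi (F2 g) p psi tau = - a &
      phi (F3 g) p psi tau = b].
Proof.
move=> _ _ a_neq0 A_XY dpsi dp psi0 p0 phi1_0 phi2_0 phi3_0 tau_gt0 phi1_tau phi1_neq0.
have [phi2_sqr phi3_tau] :=
  reduced_first_integrals A_XY dpsi dp psi0 p0 tau_gt0 phi1_0 phi1_tau.
split=> //; last by rewrite phi3_tau.
move/eqP: phi2_sqr; rewrite eqf_sqr phi2_0 => /orP[/eqP phi2_tau|/eqP //].
have dphi2 t : 0 < t -> derivable (phi (F2 g) p psi) t 1.
  by move=> /(is_derive_reduced dpsi dp (F2 g)) [].
have phi2_0_neq0 : phi (F2 g) p psi 0 != 0 by rewrite phi2_0.
have phi2_tau_0 : phi (F2 g) p psi tau = phi (F2 g) p psi 0.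
  by rewrite phi2_tau phi2_0.
have [t t_in phi1_t] :=
  root_between_equal_slopes (is_derive_phi1 A_XY dpsi dp) dphi2
    (phi_cvg_right psi0 p0) (phi_cvg_right psi0 p0) tau_gt0 phi1_0 phi1_tau
    phi2_0_neq0 phi2_tau_0.
by move/eqP: (phi1_neq0 t t_in).
Qed.
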